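(* Assume $d(\eta,\cdot)$ attains its minimum over $\mathcal G$ at $g^*=g^{(\theta^* )}$ with $\theta^*\neq0$, and let $g^{bf}$ be the maximum-entropy element of $P$. Let $g^{ds}\in\Delta_k^n$ be any OCDS prediction and $g^{ds*}=g^{ds}(w^*,b^*_{1:p})$ (assuming its parameters lie in $(0,1)$). If $$\|\epsilon\|_\infty\le\frac{d(\eta,g^{ds*})-d(\eta,g^* )+d(\eta,g^{ds})-d(\eta,g^{ds*})}{2\|\theta^*\|_1},$$ then $d(\eta,g^{bf})\le d(\eta,g^{ds})$.
   Context: Standard setup. Let $n\ge1$, $k\ge2$, $p\ge1$ be integers and $m=p+k$. There are $n$ data points $x_1,\dots,x_n$ and $p$ rules $h^{(1)},\dots,h^{(p)}$, each a map from $\{x_1,\dots,x_n\}$ to $\{1,\dots,k\}\cup\{?\}$, where ''?'' means abstain. Let $n_j\ge1$ be the number of indices $i$ with $h^{(j)}(x_i)\neq ?$. $\Delta_k$ denotes the probability simplex in $\mathbb{R}^k$; an element $z\in\Delta_k^n\subset\mathbb{R}^{nk}$ is written $z=(z_1,\dots,z_n)$ with $z_i=(z_{i1},\dots,z_{ik})\in\Delta_k$. For $j\le p$ let $h^{(j)}\in\{0,1\}^{nk}$ also denote the vector with $h^{(j)}_{i\ell}=1$ iff $h^{(j)}(x_i)=\ell$; for $\ell\le k$ let $\vec e^{\,n}_\ell\in\{0,1\}^{nk}$ have entries $(\vec e^{\,n}_\ell)_{i\ell'}=\mathbf 1(\ell'=\ell)$. The matrix $A\in\mathbb{R}^{m\times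 nk}$ has rows $a^{(j)}=h^{(j)}/n_j$ for $1\le j\le p$ and $a^{(p+\ell)}=\vec e^{\,n}_\ell/n$ for $1\le\ell\le k$. For $\theta\in\mathbb{R}^m$ put $a^{(\theta)}=A^\top\theta\in\mathbb{R}^{nk}$ (entries $a^{(\theta)}_{i\ell}$) and define $g^{(\theta)}\in\Delta_k^n$ by $g^{(\theta)}_{i\ell}=\exp(a^{(\theta)}_{i\ell})/\sum_{\ell'=1}^k\exp(a^{(\theta)}_{i\ell'})$; let $\mathcal G=\{g^{(\theta)}:\theta\in\mathbb{R}^m\}$. A fixed ''true labeling'' $\eta\in\Delta_k^n$ is given and $b^*:=A\eta\in\mathbb{R}^m$; write $b^*_j$ ($j\le p$) for the empirical rule accuracies and $w^*_\ell:=b^*_{p+\ell}$ for the empirical class frequencies. Given $b\in\mathbb{R}^m$ and $\epsilon\in\mathbb{R}^m$ with $\epsilon\ge0$ and $b-\epsilon\le b^*\le b+\epsilon$ (entrywise), let $P=\{z\in\Delta_k^n:\ b-\epsilon\le Az\le b+\epsilon\}$ (entrywise). The maximum-entropy element of $P$ is the unique minimizer of $\sum_{i,\ell}z_{i\ell}\log z_{i\ell}$ over $P$ (with $0\log0=0$). For $\mu,\nu\in\Delta_k^n$, $d(\mu,\nu)=\sum_{i=1}^n\mathrm{KL}(\mu_i\|\nu_i)=\sum_{i,\ell}\mu_{i\ell}\log(\mu_{i\ell}/\nu_{i\ell})$, with $0\log(0/x)=0$. One-coin Dawid–Skene (OCDS) prediction: for class frequencies $w\in\Delta_k$ and rule accuracies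 $b\in(0,1)^p$, $g^{ds}(w,b)\in\Delta_k^n$ is defined by $g^{ds}(w,b)_{i\ell}=\widehat g_{i\ell}/\sum_{\ell'}\widehat g_{i\ell'}$ where $\widehat g_{i\ell}=w_\ell\prod_{j:\,h^{(j)}(x_i)=\ell}b_j\prod_{j:\,h^{(j)}(x_i)\notin\{\ell,?\}}\frac{1-b_j}{k-1}$; an OCDS prediction is any $g^{ds}(w,b)$ of this form or a limit in $\Delta_k^n$ of such. *)

From HB Require Import structures.
From mathcomp Require Import all_boot all_order all_algebra.
From mathcomp Require Import all_classical all_reals all_analysis.
Set Implicit Arguments. Unset Strict Implicit. Unset Printing Implicit Defensive.
Import Order.TTheory GRing.Theory Num.Theory.
Local Open Scope ring_scope.

Section Defs.
Variable R : realType.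
Variables n k p : nat.

(* Data points are indexed by 'I_n, classes by 'I_k, rules by 'I_p.
   A rule is h j : 'I_n -> option 'I_k, where None means "abstain" (?).
   Rows of A (m = p + k of them) are indexed by 'I_p + 'I_k:
   inl j is row j (rule j), inr l is row p + l (class l). *)
Definition rules := 'I_p -> 'I_n -> option 'I_k.
Definition vecnk := 'I_n -> 'I_k -> R.
Definition vecm := 'I_p + 'I_k -> R.

Definition in_simplex (z : vecnk) : Prop :=
  forall i, (forall l, 0 <= z i l) /\ \sum_(l < k) z i l = 1.

Definition nj (h : rules) (j : 'I_p) : nat := #|[set i | h j i != None]|.

Definition Arow (h : rules) (r : 'I_p + 'I_k) (i : 'I_n) (l : 'I_k) : R :=
  match r with
  | inl j => (h j i == Some l)%:R / (nj h j)%:R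
  | inr l' => (l == l')%:R / n%:R
  end.

Definition Amul (h : rules) (z : vecnk) : vecm :=
  fun r => \sum_(i < n) \sum_(l < k) Arow h r i l * z i l.

Definition atheta (h : rules) (th : vecm) : vecnk :=
  fun i l => \sum_(r : 'I_p + 'I_k) th r * Arow h r i l.

Definition gtheta (h : rules) (th : vecm) : vecnk :=
  fun i l => expR (atheta h th i l) / \sum_(l' < k) expR (atheta h th i l').

Definition kl_term (a b : R) : \bar R :=
  if a == 0 then 0%E else if b <= 0 then +oo%E else (a * ln (a / b))%:E.

Definition dKL (mu nu : vecnk) : \bar R :=
  (\sum_(i < n) \sum_(l < k) kl_term (mu i l) (nu i l))%E.

Definition xlogx (x : R) : R := if x == 0 then 0 else x * ln x.

Definition negent (z : vecnk) : R := \sum_(i < n) \sum_(l < k) xlogx (z i l).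

Definition inP (h : rules) (b eps : vecm) (z : vecnk) : Prop :=
  in_simplex z /\ forall r, b r - eps r <= Amul h z r <= b r + eps r.

Definition is_maxent (h : rules) (b eps : vecm) (g : vecnk) : Prop :=
  inP h b eps g /\ forall z, inP h b eps z -> negent g <= negent z.

Definition ghat (h : rules) (w : 'I_k -> R) (bb : 'I_p -> R) : vecnk :=
  fun i l => w l * (\prod_(j < p | h j i == Some l) bb j)
                 * (\prod_(j < p | (h j i != Some l) && (h j i != None))
                       ((1 - bb j) / (k%:R - 1))).

Definition gds (h : rules) (w : 'I_k -> R) (bb : 'I_p -> R) : vecnk :=
  fun i l => ghat h w bb i l / \sum_(l' < k) ghat h w bb i l'.

Definition ocds_param (w : 'I_k -> R) (bb : 'I_p -> R) : Prop :=
  (forall l, 0 <= w l) /\ \sum_(l < k) w l = 1 /\ (forall j, 0 < bb j < 1).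

(* g is an OCDS prediction: g in Delta_k^n and g is a limit of
   predictions g^ds(w,b) with admissible parameters (closure, in the
   sup-distance on the finite-dimensional space R^{nk}) *)
Definition is_ocds (h : rules) (g : vecnk) : Prop :=
  in_simplex g /\
  forall e : R, 0 < e -> exists w bb, ocds_param w bb /\
     forall i l, `|gds h w bb i l - g i l| < e.

Definition norm1 (th : vecm) : R := \sum_(r : 'I_p + 'I_k) `|th r|.
Definition norminf (v : vecm) : R := \big[Num.max/0]_(r : 'I_p + 'I_k) `|v r|.

End Defs.

From HB Require Import structures.
From mathcomp Require Import all_boot all_order all_algebra.
From mathcomp Require Import all_classical all_reals all_analysis.
From mathcomp Require Import ring lra.
Set Implicit Arguments. Unset Strict Implicit. Unset Printing Implicit Defensive.
Import Order.TTheory GRing.Theory Num.Theory.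
Local Open Scope ring_scope.

(* Let g be the maximum-entropy element of P. Since eta is in the convex set P,
   negative entropy cannot decrease from g towards eta; comparing with the
   tangent of x ln x and letting t -> 0+ on the segment g + t (eta - g) gives
   supp eta <= supp g and the first-order condition sum (eta - g) ln g >= 0.
   Then, for any softmax model g^theta,
     d(eta, g) = d(eta, g^theta) + sum (eta - g) ln g^theta
                 + sum g ln (g^theta / g) - sum (eta - g) ln g,
   where the third term is <= 0 by Gibbs' inequality, the last one is <= 0 by
   first-order optimality, and the second equals theta . (A eta - A g) because
   the log-partition cancels between two row-stochastic vectors; as both eta
   and g lie in P, it is at most 2 ||eps||_oo ||theta||_1. *)

Section LogInequalities.
Variable R : realType.
Implicit Types a e g t x y : R.

Lemma ln_le_subr1 x : 0 < x -> ln x <= x - 1.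
Proof.
move=> x0; have := @le_ln1Dx R (x - 1).
rewrite addrCA subrr addr0; apply; lra.
Qed.

Lemma ln_sub_le x y : 0 < x -> 0 < y -> ln x - ln y <= (x - y) / y.
Proof.
move=> x0 y0; rewrite -ln_div ?posrE //.
by have := @ln_le_subr1 (x / y) (divr_gt0 x0 y0); rewrite mulrBl divff ?gt_eqF.
Qed.

Lemma gibbs_ineq a y : 0 <= a -> 0 < y -> a * ln y - a * ln a <= y - a.
Proof.
move=> a0 y0; have [->|an0] := eqVneq a 0; first by rewrite !mul0r !subr0 ltW.
have ap : 0 < a by rewrite lt_def an0.
have := ler_wpM2l a0 (@ln_sub_le y a y0 ap).
by rewrite mulrBr mulrCA divff ?mulr1.
Qed.

Lemma xlogxE x : xlogx x = x * ln x.
Proof. by rewrite /xlogx; case: eqP => [->|]; rewrite ?mul0r. Qed.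

(* Tangent-line bound of the convex [x ln x] at the point [g + t (e - g)]. *)
Lemma xlogx_mix_le e g t : 0 <= e -> 0 <= g -> 0 < t < 1 ->
  xlogx (g + t * (e - g)) <=
  xlogx g + t * ((e - g) * ln (g + t * (e - g))) + t * (e - g).
Proof.
move=> e0 g0 /andP[t0 t1]; rewrite !xlogxE; set z := g + t * (e - g).
have z0 : 0 <= z by rewrite /z; nra.
have [z_eq0|zn0] := eqVneq z 0.
  have g_eq0 : g = 0 by move: z_eq0; rewrite /z => /eqP; nra.
  have e_eq0 : e = 0 by move: z_eq0; rewrite /z => /eqP; nra.
  by rewrite z_eq0 g_eq0 e_eq0 !(mul0r, mulr0, subr0, addr0).
have zp : 0 < z by rewrite lt_def zn0.
have := @gibbs_ineq g z g0 zp.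
have -> : t * ((e - g) * ln z) = (z - g) * ln z by rewrite /z; ring.
have -> : t * (e - g) = z - g by rewrite /z; ring.
lra.
Qed.

Lemma ln_mix_le_pos e g t : 0 <= e -> 0 < g -> 0 < t <= 1/2 ->
  (e - g) * ln (g + t * (e - g)) <= (e - g) * ln g + t * (2 * (e - g) ^+ 2 / g).
Proof.
move=> e0 gp /andP[t0 th]; set z := g + t * (e - g).
have zg : g / 2 <= z by rewrite /z; nra.
have zp : 0 < z by lra.
have sq0 : 0 <= t * (e - g) ^+ 2 by apply: mulr_ge0; [lra | apply: sqr_ge0].
suff : (e - g) * (ln z - ln g) <= t * (e - g) ^+ 2 * (2 / g) by lra.
have [ge|eg] := leP g e.
  apply: (le_trans (ler_wpM2l (_ : 0 <= e - g) (@ln_sub_le z g zp gp))); first lra.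
  have -> : (e - g) * ((z - g) / g) = t * (e - g) ^+ 2 / g by rewrite /z expr2; ring.
  have sg : 0 <= t * (e - g) ^+ 2 / g by rewrite divr_ge0 //; lra.
  have -> : t * (e - g) ^+ 2 * (2 / g) = 2 * (t * (e - g) ^+ 2 / g) by ring.
  lra.
have -> : (e - g) * (ln z - ln g) = (g - e) * (ln g - ln z) by ring.
apply: (le_trans (ler_wpM2l (_ : 0 <= g - e) (@ln_sub_le g z gp zp))); first lra.
have -> : (g - e) * ((g - z) / z) = t * (e - g) ^+ 2 * z^-1 by rewrite /z expr2; ring.
apply: ler_wpM2l => //; rewrite -[2 / g]invf_div lef_pV2 ?posrE //.
exact: divr_gt0.
Qed.

Lemma mul_lnM e t : 0 <= e -> 0 < t -> e * ln (t * e) = e * ln t + xlogx e.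
Proof.
move=> e0 t0; rewrite xlogxE.
have [->|en0] := eqVneq e 0; first by rewrite !mul0r addr0.
by rewrite lnM ?posrE // ?mulrDr // lt_def en0.
Qed.

Lemma ln_mix_le e g t : 0 <= e -> 0 <= g -> 0 < t <= 1/2 ->
  (e - g) * ln (g + t * (e - g)) <= (e - g) * ln g + t * (2 * (e - g) ^+ 2 / g)
    + (if g == 0 then e * ln t + xlogx e else 0).
Proof.
move=> e0 g0 t01; have [->|gn0] := eqVneq g 0.
  rewrite !subr0 add0r (ln0 (lexx 0)) GRing.invr0 !mulr0 !add0r mul_lnM //; by case/andP: t01.
by rewrite addr0; apply: ln_mix_le_pos => //; rewrite lt_def gn0.
Qed.

Lemma small_log_coef_eq0 D C M : 0 <= C -> 0 <= M ->
  (forall t, 0 < t <= 1/2 -> 0 <= D + t * C + M * ln t) -> M = 0.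
Proof.
move=> C0 M0 H; apply/eqP; apply: contraT => Mn0.
have Mp : 0 < M by rewrite lt_def Mn0.
set K := `|D| + C + 1.
set t := Num.min (1/2 : R) (expR (- (K / M))).
have tp : 0 < t by rewrite lt_min expR_gt0 andbT; lra.
have th : t <= 1/2 by rewrite ge_min lexx.
have lnt : ln t <= - (K / M).
  by rewrite -[X in _ <= X]expRK ler_ln ?posrE ?expR_gt0 // ge_min lexx orbT.
have MlnK : M * ln t <= - K.
  by have := ler_wpM2l M0 lnt; rewrite mulrN mulrCA divff ?mulr1 ?gt_eqF.
have tC : t * C <= C by rewrite -[X in _ <= X]mul1r ler_wpM2r //; lra.
have := H t; rewrite tp th => /(_ isT); have := ler_norm D; rewrite /K in MlnK; lra.
Qed.

Lemma small_linear_ge0 D C : 0 <= C ->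
  (forall t, 0 < t <= 1/2 -> 0 <= D + t * C) -> 0 <= D.
Proof.
move=> C0 H; rewrite leNgt; apply/negP => Dn.
set t := Num.min (1/2 : R) (- D / (C + 1)).
have q : 0 < - D / (C + 1) by apply: divr_gt0; lra.
have tp : 0 < t by rewrite lt_min q andbT; lra.
have th : t <= 1/2 by rewrite ge_min lexx.
have tC : t * C <= - D / (C + 1) * C by rewrite ler_wpM2r // ge_min lexx orbT.
have lt_D : - D / (C + 1) * C < - D.
  by rewrite mulrAC ltr_pdivrMr; nra.
have := H t; rewrite tp th => /(_ isT); lra.
Qed.

End LogInequalities.

Section Simplex.
Variables (R : realType) (n k : nat).
Implicit Types mu nu : vecnk R n k.

Lemma simplex_ge0 mu : in_simplex mu -> forall i l, 0 <= mu i l.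
Proof. by move=> Smu i; case: (Smu i). Qed.

Lemma simplex_row_sub mu nu : in_simplex mu -> in_simplex nu ->
  forall i, \sum_(l < k) (mu i l - nu i l) = 0.
Proof. by move=> Smu Snu i; rewrite sumrB (Smu i).2 (Snu i).2 subrr. Qed.

Definition mix mu nu (t : R) : vecnk R n k := fun i l => mu i l + t * (nu i l - mu i l).

Lemma Amul_mix p (h : rules n k p) mu nu t r :
  Amul h (mix mu nu t) r = Amul h mu r + t * (Amul h nu r - Amul h mu r).
Proof.
rewrite /Amul /mix mulrBr !mulr_sumr -sumrB -big_split /=; apply: eq_bigr => i _.
rewrite !mulr_sumr -sumrB -big_split /=; apply: eq_bigr => l _; ring.
Qed.

Lemma inP_mix p (h : rules n k p) b eps mu nu t :
  inP h b eps mu -> inP h b eps nu -> 0 <= t <= 1 -> inP h b eps (mix mu nu t).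
Proof.
move=> [Smu Amu] [Snu Anu] /andP[t0 t1]; split.
  move=> i; split=> [l|].
    by have := simplex_ge0 Smu i l; have := simplex_ge0 Snu i l; rewrite /mix; nra.
  by rewrite /mix big_split -mulr_sumr /= simplex_row_sub // mulr0 addr0 (Smu i).2.
move=> r; rewrite Amul_mix.
by have /andP[? ?] := Amu r; have /andP[? ?] := Anu r; apply/andP; split; nra.
Qed.

End Simplex.

Section MaxentFirstOrder.
Variables (R : realType) (n k p : nat) (h : rules n k p) (b eps : vecm R k p).
Variables (eta g : vecnk R n k).
Hypotheses (Hg : is_maxent h b eps g) (He : inP h b eps eta).

Let Sg : in_simplex g := Hg.1.1.
Let Se : in_simplex eta := He.1.

(* Maximality of the entropy at [g] along the segment towards [eta], combined
   with the tangent bound of [x ln x] at the moving point. *)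
Lemma maxent_dir_ge0 t : 0 < t <= 1/2 ->
  0 <= \sum_(i < n) \sum_(l < k) (eta i l - g i l) * ln (mix g eta t i l).
Proof.
move=> /andP[t0 th]; set S := (X in 0 <= X).
have t01 : 0 <= t <= 1 by apply/andP; split; lra.
have opt := Hg.2 _ (inP_mix Hg.1 He t01).
have tangent : negent (mix g eta t) <= \sum_(i < n) \sum_(l < k)
    (xlogx (g i l) + t * ((eta i l - g i l) * ln (mix g eta t i l)) + t * (eta i l - g i l)).
  apply: ler_sum => i _; apply: ler_sum => l _.
  by apply: xlogx_mix_le; rewrite ?simplex_ge0 ?t0 //; lra.
have split_sum : \sum_(i < n) \sum_(l < k)
    (xlogx (g i l) + t * ((eta i l - g i l) * ln (mix g eta t i l)) + t * (eta i l - g i l))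
    = negent g + t * S + t * \sum_(i < n) \sum_(l < k) (eta i l - g i l).
  rewrite /negent /S !mulr_sumr -!big_split /=; apply: eq_bigr => i _.
  by rewrite !mulr_sumr -!big_split.
rewrite split_sum big1 ?mulr0 ?addr0 in tangent => [|i _]; last exact: simplex_row_sub.
by rewrite -(pmulr_rge0 _ t0); lra.
Qed.

(* As [t -> 0+] the [M ln t] term forces [M = 0], i.e. the support inclusion;
   then [E = 0] and [t C -> 0] leaves [0 <= D]. *)
Lemma maxent_first_order : (forall i l, g i l = 0 -> eta i l = 0) /\
  0 <= \sum_(i < n) \sum_(l < k) (eta i l - g i l) * ln (g i l).
Proof.
set D := \sum_(i < n) \sum_(l < k) _.
set C := \sum_(i < n) \sum_(l < k) (2 * (eta i l - g i l) ^+ 2 / g i l).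
set M := \sum_(i < n) \sum_(l < k) (if g i l == 0 then eta i l else 0).
set E := \sum_(i < n) \sum_(l < k) (if g i l == 0 then xlogx (eta i l) else 0).
have key t : 0 < t <= 1/2 -> 0 <= D + E + t * C + M * ln t.
  move=> t01; apply: (le_trans (maxent_dir_ge0 t01)).
  have -> : D + E + t * C + M * ln t = \sum_(i < n) \sum_(l < k)
      ((eta i l - g i l) * ln (g i l) + t * (2 * (eta i l - g i l) ^+ 2 / g i l)
       + (if g i l == 0 then eta i l * ln t + xlogx (eta i l) else 0)).
    rewrite /D /E /C /M mulr_sumr mulr_suml -!big_split /=; apply: eq_bigr => i _.
    rewrite mulr_sumr mulr_suml -!big_split /=; apply: eq_bigr => l _.
    by case: eqP => _; rewrite ?mul0r; ring.
  apply: ler_sum => i _; apply: ler_sum => l _.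
  exact: ln_mix_le (simplex_ge0 Se i l) (simplex_ge0 Sg i l) t01.
have C0 : 0 <= C.
  apply: sumr_ge0 => i _; apply: sumr_ge0 => l _.
  by rewrite divr_ge0 ?simplex_ge0 // mulr_ge0 ?sqr_ge0.
have M0 i l : 0 <= (if g i l == 0 then eta i l else 0).
  by case: ifP => _; rewrite ?simplex_ge0.
have M_eq0 : M = 0.
  exact: small_log_coef_eq0 C0 (sumr_ge0 _ (fun i _ => sumr_ge0 _ (fun l _ => M0 i l))) key.
have supp i l : g i l = 0 -> eta i l = 0.
  move=> gz; have row := psumr_eq0P (fun i _ => sumr_ge0 _ (fun l _ => M0 i l)) M_eq0 (i:=i) isT.
  by have := psumr_eq0P (fun l _ => M0 i l) row (i:=l) isT; rewrite gz eqxx.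
have E_eq0 : E = 0.
  by apply: big1 => i _; apply: big1 => l _; case: eqP => // /supp ->; rewrite /xlogx eqxx.
split => //; apply: (small_linear_ge0 C0) => t t01.
by have := key t t01; rewrite M_eq0 E_eq0 mul0r !addr0.
Qed.

End MaxentFirstOrder.

Section Softmax.
Variables (R : realType) (n k p : nat) (h : rules n k p) (th : vecm R k p).
Hypothesis k_gt0 : (0 < k)%N.

Definition log_partition (i : 'I_n) : R := ln (\sum_(l < k) expR (atheta h th i l)).

Lemma partition_gt0 i : 0 < \sum_(l < k) expR (atheta h th i l).
Proof.
rewrite (bigD1 (Ordinal k_gt0)) //= ltr_pwDl ?expR_gt0 //.
by apply: sumr_ge0 => l _; rewrite ltW ?expR_gt0.
Qed.

Lemma gtheta_gt0 i l : 0 < gtheta h th i l.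
Proof. by rewrite divr_gt0 ?expR_gt0 ?partition_gt0. Qed.

Lemma gtheta_simplex : in_simplex (gtheta h th).
Proof.
move=> i; split=> [l|]; first exact: ltW (gtheta_gt0 i l).
by rewrite /gtheta -mulr_suml divff ?gt_eqF ?partition_gt0.
Qed.

Lemma ln_gtheta i l : ln (gtheta h th i l) = atheta h th i l - log_partition i.
Proof. by rewrite /gtheta ln_div ?posrE ?expR_gt0 ?partition_gt0 // expRK. Qed.

(* The log-partition terms cancel because both arguments have unit row sums. *)
Lemma sum_sub_ln_gtheta (mu nu : vecnk R n k) : in_simplex mu -> in_simplex nu ->
  \sum_(i < n) \sum_(l < k) (mu i l - nu i l) * ln (gtheta h th i l)
  = \sum_r th r * (Amul h mu r - Amul h nu r).
Proof.
move=> Smu Snu.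
transitivity (\sum_(i < n) \sum_(l < k) (mu i l - nu i l) * atheta h th i l
   - \sum_(i < n) log_partition i * \sum_(l < k) (mu i l - nu i l)).
  rewrite -sumrB; apply: eq_bigr => i _; rewrite mulr_sumr -sumrB.
  by apply: eq_bigr => l _; rewrite ln_gtheta; ring.
rewrite [X in _ - X]big1 ?subr0 => [|i _]; last by rewrite simplex_row_sub ?mulr0.
transitivity (\sum_r \sum_(i < n) \sum_(l < k) th r * Arow R h r i l * (mu i l - nu i l)).
  rewrite [RHS]exchange_big /=; apply: eq_bigr => i _.
  rewrite [RHS]exchange_big /=; apply: eq_bigr => l _.
  by rewrite /atheta mulr_sumr; apply: eq_bigr => r _; ring.
apply: eq_bigr => r _; rewrite /Amul -sumrB mulr_sumr; apply: eq_bigr => i _.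
by rewrite -sumrB mulr_sumr; apply: eq_bigr => l _; ring.
Qed.

End Softmax.

Lemma le_norminf (R : realType) k p (v : vecm R k p) r : `|v r| <= norminf v.
Proof. by rewrite /norminf (bigD1 r) //= le_max lexx. Qed.

Lemma norm1_gt0 (R : realType) k p (th : vecm R k p) : th != (fun _ => 0) -> 0 < norm1 th.
Proof.
move=> th_neq0; rewrite lt_def sumr_ge0 // andbT; apply: contra th_neq0 => /eqP th_eq0.
apply/eqP/funext => r; apply/normr0_eq0.
exact: (psumr_eq0P (fun r _ => normr_ge0 (th r)) th_eq0 (i:=r) isT).
Qed.

Lemma Amul_pairing_le (R : realType) n k p (h : rules n k p) (b eps th : vecm R k p)
    (mu nu : vecnk R n k) : inP h b eps mu -> inP h b eps nu ->
  \sum_r th r * (Amul h mu r - Amul h nu r) <= 2 * norminf eps * norm1 th.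
Proof.
move=> [_ Amu] [_ Anu]; rewrite /norm1 mulr_sumr; apply: ler_sum => r _.
have /andP[? ?] := Amu r; have /andP[? ?] := Anu r.
have := le_norminf eps r; have := ler_norm (eps r) => ? ?.
have gap : `|Amul h mu r - Amul h nu r| <= 2 * norminf eps.
  by rewrite ler_norml; apply/andP; split; lra.
by rewrite (le_trans (ler_norm _)) // normrM mulrC ler_wpM2r.
Qed.

Lemma gibbs_sum (R : realType) n k (mu q : vecnk R n k) :
  in_simplex mu -> in_simplex q -> (forall i l, 0 < q i l) ->
  \sum_(i < n) \sum_(l < k) (mu i l * ln (q i l) - mu i l * ln (mu i l)) <= 0.
Proof.
move=> Smu Sq q_gt0.
apply: (@le_trans _ _ (\sum_(i < n) \sum_(l < k) (q i l - mu i l))).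
  by do 2![apply: ler_sum => ? _]; apply: gibbs_ineq; rewrite ?simplex_ge0.
by rewrite big1 // => i _; rewrite simplex_row_sub.
Qed.

Definition dKLr (R : realType) n k (mu nu : vecnk R n k) : R :=
  \sum_(i < n) \sum_(l < k) (mu i l * ln (mu i l) - mu i l * ln (nu i l)).

Lemma kl_termE (R : realType) (a c : R) : 0 <= a -> 0 <= c -> (c = 0 -> a = 0) ->
  kl_term a c = (a * ln a - a * ln c)%:E.
Proof.
move=> a0 c0 ca; rewrite /kl_term.
have [->|an0] := eqVneq a 0; first by rewrite !mul0r subr0.
have cp : 0 < c by rewrite lt_def c0 andbT; apply: contra an0 => /eqP/ca ->.
by rewrite leNgt cp /= ln_div ?posrE ?mulrBr // lt_def an0.
Qed.

Lemma dKL_EFin (R : realType) n k (mu nu : vecnk R n k) :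
  in_simplex mu -> in_simplex nu -> (forall i l, nu i l = 0 -> mu i l = 0) ->
  dKL mu nu = (dKLr mu nu)%:E.
Proof.
move=> Smu Snu supp; rewrite /dKL /dKLr -sumEFin; apply: eq_bigr => i _.
rewrite -sumEFin; apply: eq_bigr => l _.
by rewrite kl_termE ?simplex_ge0 //; apply: supp.
Qed.

Lemma dKL_neqNy (R : realType) n k (mu nu : vecnk R n k) : (dKL mu nu != -oo)%E.
Proof.
have addNy (x y : \bar R) : (x != -oo -> y != -oo -> x + y != -oo)%E.
  by move=> ? ?; rewrite adde_eq_ninfty negb_or; apply/andP.
rewrite /dKL; elim/big_ind: _ => // i _; elim/big_ind: _ => // l _.
by rewrite /kl_term; case: ifP => //; case: ifP.
Qed.

Lemma dKLr_maxent_le (R : realType) n k p (h : rules n k p) (b eps th : vecm R k p)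
    (eta g : vecnk R n k) : (0 < k)%N -> is_maxent h b eps g -> inP h b eps eta ->
  dKLr eta g <= dKLr eta (gtheta h th) + 2 * norminf eps * norm1 th.
Proof.
move=> k_gt0 Hg He; set G := gtheta h th.
have -> : dKLr eta g = dKLr eta G
    + \sum_(i < n) \sum_(l < k) (eta i l - g i l) * ln (G i l)
    + \sum_(i < n) \sum_(l < k) (g i l * ln (G i l) - g i l * ln (g i l))
    - \sum_(i < n) \sum_(l < k) (eta i l - g i l) * ln (g i l).
  rewrite /dKLr -!big_split -sumrB /=; apply: eq_bigr => i _.
  by rewrite -!big_split -sumrB /=; apply: eq_bigr => l _; ring.
have [_ first_order] := maxent_first_order Hg He.
have gibbs := gibbs_sum Hg.1.1 (gtheta_simplex h th k_gt0) (gtheta_gt0 h th k_gt0).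
have dual := Amul_pairing_le th He Hg.1.
rewrite sum_sub_ln_gtheta //; first lra.
- exact: He.1.
- exact: Hg.1.1.
Qed.

Lemma le_telescope (R : realType) (a c e : R) (x w : \bar R) :
  (x != -oo)%E -> (w != -oo)%E -> 0 < c ->
  (e%:E <= (x - a%:E + w - x) * (c^-1)%:E)%E -> ((a + c * e)%:E <= w)%E.
Proof.
move=> xNy wNy c_gt0.
case: w wNy => [w _|_ _|]; [|exact: leey|by rewrite eqxx].
case: x xNy => [x _|_|]; last by rewrite eqxx.
  rewrite -!EFinD -EFinM !lee_fin ler_pdivlMr //.
  have -> : x - a + w - x = w - a by ring.
  lra.
by rewrite /= gt0_mulNye ?lte_fin ?invr_gt0.
Qed.

Theorem lemma7 (R : realType) (n k p : nat) (h : rules n k p)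
  (eta : vecnk R n k) (b eps thstar : vecm R k p) (gbf g_ds : vecnk R n k) :
  (1 <= n)%N -> (2 <= k)%N -> (1 <= p)%N ->
  (forall j, (1 <= nj h j)%N) ->
  in_simplex eta ->
  (forall r, 0 <= eps r) ->
  (forall r, b r - eps r <= Amul h eta r <= b r + eps r) ->
  (* d(eta, .) attains its minimum over G at g* = g^(thstar), thstar <> 0 *)
  (forall th : vecm R k p,
      (dKL eta (gtheta h thstar) <= dKL eta (gtheta h th))%E) ->
  thstar != (fun _ => 0) ->
  is_maxent h b eps gbf ->
  is_ocds h g_ds ->
  (* parameters of g^{ds star} = g^ds(w star, b star) lie in (0,1) *)
  (forall l, 0 < Amul h eta (inr l) < 1) ->
  (forall j, 0 < Amul h eta (inl j) < 1) ->
  ((norminf eps)%:E <=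
     (dKL eta (gds h (fun l => Amul h eta (inr l)) (fun j => Amul h eta (inl j)))
      - dKL eta (gtheta h thstar)
      + dKL eta g_ds
      - dKL eta (gds h (fun l => Amul h eta (inr l)) (fun j => Amul h eta (inl j))))
     * ((2 * norm1 thstar)^-1)%:E)%E ->
  (dKL eta gbf <= dKL eta g_ds)%E.
Proof.
move=> _ k_ge2 _ _ Se _ Heb _ th_neq0 Hbf _ _ _ Heps.
have He : inP h b eps eta by [].
have k_gt0 : (0 < k)%N by apply: leq_trans k_ge2.
have [supp _] := maxent_first_order Hbf He.
have Gpos := gtheta_gt0 h thstar k_gt0.
rewrite (dKL_EFin Se (gtheta_simplex h thstar k_gt0)) in Heps; last first.
  by move=> i l G_eq0; have := Gpos i l; rewrite G_eq0 ltxx.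
have := le_telescope (dKL_neqNy _ _) (dKL_neqNy _ _) _ Heps.
rewrite pmulr_rgt0 ?norm1_gt0 // => /(_ isT).
rewrite (dKL_EFin Se Hbf.1.1 supp); apply: le_trans; rewrite lee_fin mulrAC.
exact: dKLr_maxent_le k_gt0 Hbf He.
Qed.
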